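(* Let $\mathcal C$ be a single-mixed $\mathsf{B1}$-category satisfying $\Pi_{\mathbf t}=\mathrm{id}_{\mathbf t}$. Then for every map $f\colon A\to\mathbf t$ we have $f+\Pi_A=f$, and dually for every map $g\colon\mathbf f\to B$ we have $g+\amalg_B=g$.
   Context: A *-autonomous category is a symmetric monoidal category $(\mathcal C,\wedge,\mathbf t)$ with natural isomorphisms $\alpha,\sigma$, $\rho_A\colon A\wedge\mathbf t\to A$, $\lambda_A\colon\mathbf t\wedge A\to A$, a contravariant functor $A\mapsto\bar A$ with natural isomorphism $\bar{\bar A}\cong A$, and a natural bijection $\mathrm{Hom}(A\wedge B,C)\cong\mathrm{Hom}(A,\bar B\vee C)$, where $A\vee B:=\overline{\bar B\wedge\bar A}$, $\mathbf f:=\bar{\mathbf t}$; $\vee$ is symmetric monoidal with unit isomorphisms $\check\rho_A\colon A\vee\mathbf f\to A$, $\check\lambda_A\colon\mathbf f\vee A\to A$. Switch maps $s$ are the canonical natural maps $A\wedge(B\vee C)\to(A\wedge B)\vee C$ (and variants via symmetries) obtained by transposition. A $\mathsf{B1}$-category is a *-autonomous category such that (1) there is a Boolean algebra $\mathcal B$ and a function $F$ from objects to $\mathcal B$ with $F(A)\le F(B)$ iff $\mathrm{Hom}(A,B)\ne\emptyset$, and (2) every object $A$ carries a cocommutative $\wedge$-comonoid $\Delta_A\colon A\to A\wedge A$, $\Pi_A\colon A\to\mathbf t$ (coassociative, cocommutative, $\rho_A\circ(A\wedge\Pi_A)\circ\Delta_A=\mathrm{id}_A$). Dually every object carries a commutative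 $\vee$-monoid $\nabla_A\colon A\vee A\to A$, $\amalg_A\colon\mathbf f\to A$ (the duals of $\Delta_{\bar A},\Pi_{\bar A}$). The category is single-mixed if $\Pi_{\mathbf f}=\amalg_{\mathbf t}$; then with $e=\Pi_{\mathbf f}$ set $\mathrm{mix}_{A,B}:=(A\vee\lambda_B)\circ(A\vee(e\wedge B))\circ s\circ(\check\rho_A^{-1}\wedge B)\colon A\wedge B\to A\vee B$, and for $f,g\colon A\to B$ define $f+g:=\nabla_B\circ(f\vee g)\circ\mathrm{mix}_{A,A}\circ\Delta_A$. *)

From mathcomp Require Import all_boot all_order.

Set Implicit Arguments.
Unset Strict Implicit.
Unset Printing Implicit Defensive.

Import Order.Theory.

(* A \/ B := bar (bar B /\ bar A).  Hom-sets are types, with Leibniz        *)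
(* equality of morphisms.                                                   *)

Record StarAut : Type := {
  Ob : Type;
  Hom : Ob -> Ob -> Type;
  comp : forall {A B C : Ob}, Hom B C -> Hom A B -> Hom A C;
  idm : forall (A : Ob), Hom A A;
  comp_idl : forall A B (f : Hom A B), comp (idm B) f = f;
  comp_idr : forall A B (f : Hom A B), comp f (idm A) = f;
  comp_assoc : forall A B C D (f : Hom A B) (g : Hom B C) (h : Hom C D),
      comp h (comp g f) = comp (comp h g) f;

  tens : Ob -> Ob -> Ob;
  tensm : forall {A A' B B' : Ob}, Hom A A' -> Hom B B' -> Hom (tens A B) (tens A' B');
  tensm_id : forall A B, tensm (idm A) (idm B) = idm (tens A B);
  tensm_comp : forall A A' A'' B B' B'' (f : Hom A A') (f' : Hom A' A'')
      (g : Hom B B') (g' : Hom B' B''),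
      tensm (comp f' f) (comp g' g) = comp (tensm f' g') (tensm f g);
  unit : Ob;

  assoc : forall A B C, Hom (tens A (tens B C)) (tens (tens A B) C);
  assoc_inv : forall A B C, Hom (tens (tens A B) C) (tens A (tens B C));
  assoc_iso1 : forall A B C, comp (assoc_inv A B C) (assoc A B C) = idm _;
  assoc_iso2 : forall A B C, comp (assoc A B C) (assoc_inv A B C) = idm _;
  assoc_nat : forall A A' B B' C C' (f : Hom A A') (g : Hom B B') (h : Hom C C'),
      comp (assoc A' B' C') (tensm f (tensm g h))
      = comp (tensm (tensm f g) h) (assoc A B C);

  sym : forall A B, Hom (tens A B) (tens B A);
  sym_inv : forall A B, comp (sym B A) (sym A B) = idm _;
  sym_nat : forall A A' B B' (f : Hom A A') (g : Hom B B'),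
      comp (sym A' B') (tensm f g) = comp (tensm g f) (sym A B);

  runit : forall A, Hom (tens A unit) A;
  runit_inv : forall A, Hom A (tens A unit);
  runit_iso1 : forall A, comp (runit_inv A) (runit A) = idm _;
  runit_iso2 : forall A, comp (runit A) (runit_inv A) = idm _;
  runit_nat : forall A A' (f : Hom A A'),
      comp (runit A') (tensm f (idm unit)) = comp f (runit A);
  lunit : forall A, Hom (tens unit A) A;
  lunit_inv : forall A, Hom A (tens unit A);
  lunit_iso1 : forall A, comp (lunit_inv A) (lunit A) = idm _;
  lunit_iso2 : forall A, comp (lunit A) (lunit_inv A) = idm _;
  lunit_nat : forall A A' (f : Hom A A'),
      comp (lunit A') (tensm (idm unit) f) = comp f (lunit A);

  pentagon : forall A B C D,
      comp (assoc_inv A B (tens C D)) (assoc_inv (tens A B) C D)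
      = comp (tensm (idm A) (assoc_inv B C D))
          (comp (assoc_inv A (tens B C) D) (tensm (assoc_inv A B C) (idm D)));
  triangle : forall A B,
      comp (tensm (idm A) (lunit B)) (assoc_inv A unit B)
      = tensm (runit A) (idm B);
  hexagon : forall A B C,
      comp (assoc_inv B C A) (comp (sym A (tens B C)) (assoc_inv A B C))
      = comp (tensm (idm B) (sym A C))
          (comp (assoc_inv B A C) (tensm (sym A B) (idm C)));

  neg : Ob -> Ob;
  negm : forall {A B : Ob}, Hom A B -> Hom (neg B) (neg A);
  negm_id : forall A, negm (idm A) = idm (neg A);
  negm_comp : forall A B C (f : Hom A B) (g : Hom B C),
      negm (comp g f) = comp (negm f) (negm g);

  dn : forall A, Hom (neg (neg A)) A;
  dn_inv : forall A, Hom A (neg (neg A));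
  dn_iso1 : forall A, comp (dn_inv A) (dn A) = idm _;
  dn_iso2 : forall A, comp (dn A) (dn_inv A) = idm _;
  dn_nat : forall A B (f : Hom A B), comp (dn B) (negm (negm f)) = comp f (dn A);

  (* natural bijection Hom(A /\ B, C) ~= Hom(A, bar B \/ C),
     where bar B \/ C = bar (bar C /\ bar bar B) *)
  cur : forall {A B C : Ob}, Hom (tens A B) C -> Hom A (neg (tens (neg C) (neg (neg B))));
  uncur : forall {A B C : Ob}, Hom A (neg (tens (neg C) (neg (neg B)))) -> Hom (tens A B) C;
  cur_uncur : forall A B C (g : Hom A (neg (tens (neg C) (neg (neg B))))), cur (uncur g) = g;
  uncur_cur : forall A B C (g : Hom (tens A B) C), uncur (cur g) = g;
  cur_nat_AC : forall A A' B C C' (f : Hom A' A) (g : Hom (tens A B) C) (h : Hom C C'),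
      cur (comp h (comp g (tensm f (idm B))))
      = comp (negm (tensm (negm h) (idm (neg (neg B))))) (comp (cur g) f);
  cur_nat_B : forall A B B' C (k : Hom B' B) (g : Hom (tens A B) C),
      cur (comp g (tensm (idm A) k))
      = comp (negm (tensm (idm (neg C)) (negm (negm k)))) (cur g)
}.

Arguments Hom {s} _ _.
Arguments comp {s A B C} _ _.
Arguments idm {s} A.
Arguments tens {s} _ _.
Arguments tensm {s A A' B B'} _ _.
Arguments unit {s}.
Arguments assoc {s} A B C.
Arguments assoc_inv {s} A B C.
Arguments sym {s} A B.
Arguments runit {s} A.
Arguments runit_inv {s} A.
Arguments lunit {s} A.
Arguments lunit_inv {s} A.
Arguments neg {s} _.
Arguments negm {s A B} _.
Arguments dn {s} A.
Arguments dn_inv {s} A.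
Arguments cur {s A B C} _.
Arguments uncur {s A B C} _.

Section Derived.
Variable C : StarAut.

Definition par (A B : Ob C) : Ob C := neg (tens (neg B) (neg A)).
Definition parm {A A' B B' : Ob C} (f : Hom A A') (g : Hom B B') :
  Hom (par A B) (par A' B') := negm (tensm (negm g) (negm f)).
Definition fls : Ob C := neg unit.

Definition rho_par (A : Ob C) : Hom (par A fls) A :=
  comp (dn A) (comp (negm (lunit_inv (neg A)))
                    (negm (tensm (dn_inv unit) (idm (neg A))))).
Definition rho_par_inv (A : Ob C) : Hom A (par A fls) :=
  comp (negm (tensm (dn unit) (idm (neg A))))
       (comp (negm (lunit (neg A))) (dn_inv A)).

Definition ev (A B : Ob C) : Hom (tens (par A B) (neg A)) B :=
  uncur (parm (dn_inv A) (idm B)).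

Definition switch (A B D : Ob C) : Hom (tens (par A B) D) (par A (tens B D)) :=
  let k : Hom (tens (tens (par A B) D) (neg A)) (tens B D) :=
    comp (tensm (ev A B) (idm D))
      (comp (assoc (par A B) (neg A) D)
        (comp (tensm (idm (par A B)) (sym D (neg A)))
              (assoc_inv (par A B) D (neg A)))) in
  comp (parm (dn A) (idm (tens B D))) (cur k).

End Derived.

Arguments par {C} A B.
Arguments parm {C A A' B B'} f g.
Arguments fls {C}.
Arguments rho_par {C} A.
Arguments rho_par_inv {C} A.
Arguments ev {C} A B.
Arguments switch {C} A B D.

Record B1cat : Type := {
  b1_sa :> StarAut;
  b1_bool : exists (d : Order.disp_t) (L : ctbDistrLatticeType d) (F : Ob b1_sa -> L),
      forall A B : Ob b1_sa, ((F A <= F B)%O : Prop) <-> inhabited (Hom A B);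
  Delta : forall A : Ob b1_sa, Hom A (tens A A);
  Pi : forall A : Ob b1_sa, Hom A unit;
  Delta_coassoc : forall A,
      comp (assoc A A A) (comp (tensm (idm A) (Delta A)) (Delta A))
      = comp (tensm (Delta A) (idm A)) (Delta A);
  Delta_cocomm : forall A, comp (sym A A) (Delta A) = Delta A;
  Delta_counit : forall A,
      comp (runit A) (comp (tensm (idm A) (Pi A)) (Delta A)) = idm A
}.

Arguments Delta {b} A.
Arguments Pi {b} A.

Section B1Derived.
Variable C : B1cat.

Definition nabla (A : Ob C) : Hom (par A A) A := comp (dn A) (negm (Delta (neg A))).
Definition amalg (A : Ob C) : Hom fls A := comp (dn A) (negm (Pi (neg A))).

Definition single_mixed : Prop := Pi (@fls C) = amalg unit.

Definition mix (A B : Ob C) : Hom (tens A B) (par A B) :=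
  comp (parm (idm A) (lunit B))
    (comp (parm (idm A) (tensm (Pi (@fls C)) (idm B)))
      (comp (switch A fls B) (tensm (rho_par_inv A) (idm B)))).

Definition plus {A B : Ob C} (f g : Hom A B) : Hom A B :=
  comp (nabla B) (comp (parm f g) (comp (mix A A) (Delta A))).

End B1Derived.

Arguments nabla {C} A.
Arguments amalg {C} A.
Arguments mix {C} A B.
Arguments plus {C A B} f g.

(* For f : A -> t, counitality of Delta_A and the naturality of mix in its
   second argument reduce f + Pi_A to nabla_t o (f \/ e) o check-rho^-1, where
   e = Pi_f; single-mixedness says e = amalg_t, the unit of nabla_t.
   For g : f -> B, the counit law of Delta at bar B reduces g + amalg_B to
   g o check-rho o mix_{f,f} o Delta_f (up to an automorphism of f that e
   absorbs), and mix_{f,f} collapses to check-rho^-1 o rho o (f /\ e) as soon as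
   lambda o (e /\ f) = rho o (f /\ e).  This last identity holds because f is
   dualizing: every map Z /\ f -> f is lambda o (x /\ f) for some x : Z -> t,
   which is shown by an Eckmann-Hilton argument in the commutative monoid
   Hom(t, t). *)

From mathcomp Require Import ssreflect.

Local Notation "g ⋅ f" := (comp g f) (at level 39, right associativity).
Local Notation "f ⊗ g" := (tensm f g) (at level 35).

Section StarAutonomous.
Context {C : StarAut}.
Implicit Types A B D X Y Z W : Ob C.
Local Notation t := (@unit C).

Lemma comp_eq_chain {A B D W} {g : Hom B D} {f : Hom A B} {h : Hom A D}
    (E : g ⋅ f = h) (x : Hom W A) :
  g ⋅ (f ⋅ x) = h ⋅ x.
Proof. by rewrite comp_assoc E. Qed.

Lemma tensm_comp_chain {A A' A'' B B' B'' W} (f : Hom A A') (f' : Hom A' A'')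
    (g : Hom B B') (g' : Hom B' B'') (x : Hom W (tens A B)) :
  (f' ⊗ g') ⋅ ((f ⊗ g) ⋅ x) = ((f' ⋅ f) ⊗ (g' ⋅ g)) ⋅ x.
Proof. by rewrite comp_assoc tensm_comp. Qed.

Lemma negm_comp_chain {A B D W} (f : Hom A B) (g : Hom B D) (x : Hom W (neg D)) :
  negm f ⋅ (negm g ⋅ x) = negm (g ⋅ f) ⋅ x.
Proof. by rewrite comp_assoc negm_comp. Qed.

Lemma tensm_factorl {A A' B B'} (f : Hom A A') (g : Hom B B') :
  f ⊗ g = (f ⊗ idm B') ⋅ (idm A ⊗ g).
Proof. by rewrite -tensm_comp comp_idl comp_idr. Qed.

Lemma tensm_factorr {A A' B B'} (f : Hom A A') (g : Hom B B') :
  f ⊗ g = (idm A' ⊗ g) ⋅ (f ⊗ idm B).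
Proof. by rewrite -tensm_comp comp_idl comp_idr. Qed.

Lemma tensm_idl_comp {A B B' B''} (f : Hom B B') (g : Hom B' B'') :
  idm A ⊗ (g ⋅ f) = (idm A ⊗ g) ⋅ (idm A ⊗ f).
Proof. by rewrite -tensm_comp comp_idl. Qed.

Lemma tensm_idr_comp {A B B' B''} (f : Hom B B') (g : Hom B' B'') :
  (g ⋅ f) ⊗ idm A = (g ⊗ idm A) ⋅ (f ⊗ idm A).
Proof. by rewrite -tensm_comp comp_idl. Qed.

Lemma split_mono_cancel {A B W} {i : Hom A B} {j : Hom B A} (E : j ⋅ i = idm A)
    {f g : Hom W A} :
  i ⋅ f = i ⋅ g -> f = g.
Proof. by move=> H; rewrite -(comp_idl f) -(comp_idl g) -E -!comp_assoc H. Qed.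

Lemma split_epi_cancel {A B W} {i : Hom A B} {j : Hom B A} (E : i ⋅ j = idm B)
    {f g : Hom B W} :
  f ⋅ i = g ⋅ i -> f = g.
Proof. by move=> H; rewrite -(comp_idr f) -(comp_idr g) -E !comp_assoc H. Qed.

Lemma tensm_iso_idr {A B} Y {i : Hom A B} {j : Hom B A} :
  i ⋅ j = idm B -> (i ⊗ idm Y) ⋅ (j ⊗ idm Y) = idm _.
Proof. by move=> E; rewrite -tensm_comp E comp_idl tensm_id. Qed.

Lemma tensm_unitr_inj {A B} (f g : Hom A B) : f ⊗ idm t = g ⊗ idm t -> f = g.
Proof. by move=> H; apply: (split_epi_cancel (runit_iso2 A)); rewrite -!runit_nat H. Qed.

Lemma tensm_unitl_inj {A B} (f g : Hom A B) : idm t ⊗ f = idm t ⊗ g -> f = g.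
Proof. by move=> H; apply: (split_epi_cancel (lunit_iso2 A)); rewrite -!lunit_nat H. Qed.

Lemma assoc_inv_nat {A A' B B' D D'} (f : Hom A A') (g : Hom B B') (h : Hom D D') :
  assoc_inv A' B' D' ⋅ ((f ⊗ g) ⊗ h) = (f ⊗ (g ⊗ h)) ⋅ assoc_inv A B D.
Proof.
apply: (split_mono_cancel (assoc_iso1 _ _ _)).
rewrite comp_assoc assoc_iso2 comp_idl (comp_eq_chain (assoc_nat _ _ _)).
by rewrite -comp_assoc assoc_iso2 comp_idr.
Qed.

Lemma lunit_inv_nat {A B} (f : Hom A B) : lunit_inv B ⋅ f = (idm t ⊗ f) ⋅ lunit_inv A.
Proof.
apply: (split_mono_cancel (lunit_iso1 B)).
rewrite comp_assoc lunit_iso2 comp_idl (comp_eq_chain (lunit_nat _)).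
by rewrite -comp_assoc lunit_iso2 comp_idr.
Qed.

Lemma dn_inv_nat {A B} (f : Hom A B) : dn_inv B ⋅ f = negm (negm f) ⋅ dn_inv A.
Proof.
apply: (split_mono_cancel (dn_iso1 B)).
rewrite comp_assoc dn_iso2 comp_idl comp_assoc dn_nat.
by rewrite -comp_assoc dn_iso2 comp_idr.
Qed.

Lemma negm_negm_dn A : negm (negm (dn A)) = dn (neg (neg A)).
Proof. by apply: (split_mono_cancel (dn_iso1 A)); rewrite dn_nat. Qed.

Lemma lunit_tens X Y : lunit (tens X Y) ⋅ assoc_inv t X Y = lunit X ⊗ idm Y.
Proof.
have P := f_equal (comp (idm t ⊗ lunit (tens X Y))) (pentagon t t X Y).
rewrite comp_assoc triangle -[idm (tens X Y)]tensm_id -assoc_inv_nat in P.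
rewrite tensm_comp_chain comp_idl in P.
apply: tensm_unitl_inj.
apply: (split_epi_cancel (assoc_iso1 t (tens t X) Y)).
apply: (split_epi_cancel (tensm_iso_idr Y (assoc_iso1 t t X))).
rewrite -!comp_assoc -P (comp_eq_chain (eq_sym (assoc_inv_nat _ _ _))).
by rewrite -comp_assoc -tensm_comp comp_idl triangle.
Qed.

Lemma runit_tens X Y : (idm X ⊗ runit Y) ⋅ assoc_inv X Y t = runit (tens X Y).
Proof.
have P := f_equal (comp (idm X ⊗ (idm Y ⊗ lunit t))) (pentagon X Y t t).
rewrite /= (comp_eq_chain (eq_sym (assoc_inv_nat _ _ _))) -?comp_assoc in P.
rewrite tensm_id triangle tensm_comp_chain comp_idl triangle in P.
rewrite (comp_eq_chain (eq_sym (assoc_inv_nat _ _ _))) -?comp_assoc in P.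
rewrite -tensm_comp comp_idl in P.
apply: tensm_unitr_inj; apply: (split_mono_cancel (assoc_iso2 X Y t)).
by rewrite P.
Qed.

Lemma lunit_unit : lunit t = runit t.
Proof.
have E : idm t ⊗ lunit t = lunit (tens t t).
  by apply: (split_mono_cancel (lunit_iso1 t)); rewrite lunit_nat.
have T := triangle t t.
rewrite E lunit_tens in T.
exact: tensm_unitr_inj.
Qed.

Lemma runit_sym A : runit A ⋅ sym unit A = lunit A.
Proof.
have H := f_equal (comp (lunit (tens t A))) (hexagon A t t).
rewrite /= (comp_eq_chain (lunit_tens _ _)) in H.
rewrite (comp_eq_chain (eq_sym (sym_nat _ _))) -?comp_assoc triangle in H.
rewrite (comp_eq_chain (lunit_nat _)) -?comp_assoc in H.
rewrite (comp_eq_chain (lunit_tens _ _)) -?comp_assoc -tensm_comp comp_idl in H.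
have H' : runit A ⊗ idm t = (lunit A ⋅ sym A t) ⊗ idm t.
  by apply: (split_mono_cancel (sym_inv A t)); rewrite H.
by rewrite (tensm_unitr_inj _ _ H') -comp_assoc sym_inv comp_idr.
Qed.

Lemma unit_endo_comm (x y : Hom t t) : x ⋅ y = y ⋅ x.
Proof.
have Exy : x ⋅ y = runit t ⋅ ((x ⊗ idm t) ⋅ ((idm t ⊗ y) ⋅ lunit_inv t)).
  rewrite (comp_eq_chain (runit_nat _)) -lunit_unit -?comp_assoc.
  by rewrite (comp_eq_chain (lunit_nat _)) -?comp_assoc lunit_iso2 comp_idr.
have Eyx : y ⋅ x = runit t ⋅ ((idm t ⊗ y) ⋅ ((x ⊗ idm t) ⋅ lunit_inv t)).
  rewrite -lunit_unit (comp_eq_chain (lunit_nat _)) -?comp_assoc lunit_unit.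
  rewrite (comp_eq_chain (runit_nat _)) -?comp_assoc -lunit_unit.
  by rewrite lunit_iso2 comp_idr.
by rewrite Exy Eyx !tensm_comp_chain !comp_idl !comp_idr.
Qed.

Lemma parm_comp {A A' A'' B B' B''} (f : Hom A A') (f' : Hom A' A'')
    (g : Hom B B') (g' : Hom B' B'') :
  parm f' g' ⋅ parm f g = parm (f' ⋅ f) (g' ⋅ g).
Proof. by rewrite /parm -negm_comp -tensm_comp -!negm_comp. Qed.

Lemma parm_comp_chain {A A' A'' B B' B'' W} (f : Hom A A') (f' : Hom A' A'')
    (g : Hom B B') (g' : Hom B' B'') (x : Hom W _) :
  parm f' g' ⋅ (parm f g ⋅ x) = parm (f' ⋅ f) (g' ⋅ g) ⋅ x.
Proof. by rewrite comp_assoc parm_comp. Qed.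

Lemma parm_idl_comp {A B B' B''} (f : Hom B B') (g : Hom B' B'') :
  parm (idm A) (g ⋅ f) = parm (idm A) g ⋅ parm (idm A) f.
Proof. by rewrite parm_comp comp_idl. Qed.

Lemma parm_id A B : parm (idm A) (idm B) = idm (par A B).
Proof. by rewrite /parm !negm_id tensm_id negm_id. Qed.

Lemma cur_inj {A B D} (g g' : Hom (tens A B) D) : cur g = cur g' -> g = g'.
Proof. by move=> H; rewrite -(uncur_cur g) H uncur_cur. Qed.

Lemma uncur_inj {A B D} (g g' : Hom A (neg (tens (neg D) (neg (neg B))))) :
  uncur g = uncur g' -> g = g'.
Proof. by move=> H; rewrite -(cur_uncur g) H cur_uncur. Qed.

Lemma cur_nat_A {A A' B D} (x : Hom A' A) (g : Hom (tens A B) D) :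
  cur (g ⋅ (x ⊗ idm B)) = cur g ⋅ x.
Proof.
have H := cur_nat_AC x g (idm D).
by rewrite comp_idl negm_id tensm_id negm_id comp_idl in H.
Qed.

Lemma uncur_nat_A {A A' B D} (x : Hom A' A) (y : Hom A (neg (tens (neg D) (neg (neg B))))) :
  uncur (y ⋅ x) = uncur y ⋅ (x ⊗ idm B).
Proof. by apply: cur_inj; rewrite cur_uncur cur_nat_A cur_uncur. Qed.

Lemma uncur_nat_C {A B D D'} (h : Hom D D') (y : Hom A (neg (tens (neg D) (neg (neg B))))) :
  uncur (negm (negm h ⊗ idm (neg (neg B))) ⋅ y) = h ⋅ uncur y.
Proof.
apply: cur_inj; rewrite cur_uncur.
have H := cur_nat_AC (idm A) (uncur y) h.
by rewrite tensm_id comp_idr cur_uncur comp_idr in H.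
Qed.

(* Unlike [uncur], this transposition avoids the double negation of [X]. *)
Definition par_uncurry {Z X Y} (h : Hom Z (par X Y)) : Hom (tens Z (neg X)) Y :=
  ev X Y ⋅ (h ⊗ idm (neg X)).

Lemma par_uncurryE {Z X Y} (h : Hom Z (par X Y)) :
  par_uncurry h = uncur (parm (dn_inv X) (idm Y) ⋅ h).
Proof. by rewrite /par_uncurry /ev uncur_nat_A. Qed.

Lemma par_uncurry_inj {Z X Y} (h h' : Hom Z (par X Y)) :
  par_uncurry h = par_uncurry h' -> h = h'.
Proof.
rewrite !par_uncurryE => /uncur_inj H.
have E : parm (dn X) (idm Y) ⋅ parm (dn_inv X) (idm Y) = idm _.
  by rewrite parm_comp dn_iso2 comp_idl parm_id.
exact: (split_mono_cancel E H).
Qed.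

Lemma par_uncurry_comp {Z Z' X Y} (h : Hom Z (par X Y)) (z : Hom Z' Z) :
  par_uncurry (h ⋅ z) = par_uncurry h ⋅ (z ⊗ idm _).
Proof. by rewrite /par_uncurry -comp_assoc -tensm_comp comp_idl. Qed.

Lemma par_uncurry_parm {Z X Y Y'} (h : Hom Z (par X Y)) (g : Hom Y Y') :
  par_uncurry (parm (idm X) g ⋅ h) = g ⋅ par_uncurry h.
Proof.
rewrite !par_uncurryE parm_comp_chain comp_idl comp_idr.
have -> : parm (dn_inv X) g = parm (idm _) g ⋅ parm (dn_inv X) (idm Y).
  by rewrite parm_comp comp_idl comp_idr.
rewrite -comp_assoc.
have -> : parm (idm (neg (neg X))) g = negm (negm g ⊗ idm (neg (neg (neg X)))).
  by rewrite /parm !negm_id.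
by rewrite uncur_nat_C.
Qed.

Lemma par_uncurry_switch X B D :
  par_uncurry (switch X B D) =
  (ev X B ⊗ idm D) ⋅ (assoc (par X B) (neg X) D ⋅
    ((idm (par X B) ⊗ sym D (neg X)) ⋅ assoc_inv (par X B) D (neg X))).
Proof.
by rewrite par_uncurryE /switch parm_comp_chain dn_iso1 comp_idl parm_id comp_idl uncur_cur.
Qed.

(* [switch] and [rho_par_inv] are composites, so [rewrite -comp_assoc] would
   unfold them; the mix map is built from locked copies instead. *)
Definition switchL X B D : Hom (tens (par X B) D) (par X (tens B D)) :=
  locked (switch X B D).
Definition rho_par_invL A : Hom A (par A fls) := locked (rho_par_inv A).

Lemma switchLE X B D : switchL X B D = switch X B D.
Proof. by rewrite /switchL -lock. Qed.

Lemma rho_par_invLE A : rho_par_invL A = rho_par_inv A.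
Proof. by rewrite /rho_par_invL -lock. Qed.

Lemma switch_natr X B D D' (g : Hom D D') :
  parm (idm X) (idm B ⊗ g) ⋅ switchL X B D = switchL X B D' ⋅ (idm (par X B) ⊗ g).
Proof.
rewrite !switchLE; apply: par_uncurry_inj.
rewrite par_uncurry_parm par_uncurry_comp !par_uncurry_switch.
rewrite tensm_comp_chain comp_idl comp_idr (tensm_factorl (ev X B)).
rewrite -[idm (tens (par X B) (neg X))]tensm_id -?comp_assoc.
rewrite (comp_eq_chain (eq_sym (assoc_nat _ _ _))) -?comp_assoc tensm_comp_chain comp_idl.
by rewrite -sym_nat tensm_idl_comp -?comp_assoc assoc_inv_nat.
Qed.

Lemma switch_runit X B : parm (idm X) (runit B) ⋅ switchL X B unit = runit (par X B).
Proof.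
rewrite switchLE; apply: par_uncurry_inj.
rewrite par_uncurry_parm par_uncurry_switch /par_uncurry.
rewrite (comp_eq_chain (runit_nat _)) -?comp_assoc.
have E : runit (tens (par X B) (neg X)) ⋅ assoc (par X B) (neg X) unit
         = idm _ ⊗ runit (neg X).
  by rewrite -runit_tens -comp_assoc assoc_iso1 comp_idr.
by rewrite (comp_eq_chain E) -?comp_assoc tensm_comp_chain comp_idl runit_sym triangle.
Qed.

Lemma rho_par_iso A : rho_par A ⋅ rho_par_invL A = idm A.
Proof.
rewrite rho_par_invLE /rho_par /rho_par_inv -?comp_assoc !negm_comp_chain -?comp_assoc.
rewrite tensm_comp_chain dn_iso2 comp_idl tensm_id comp_idl lunit_iso2.
by rewrite negm_id comp_idl dn_iso2.
Qed.

Lemma rho_par_inv_nat {A B} (f : Hom A B) :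
  parm f (idm fls) ⋅ rho_par_invL A = rho_par_invL B ⋅ f.
Proof.
rewrite !rho_par_invLE /rho_par_inv /parm negm_id -?comp_assoc !negm_comp_chain -?comp_assoc.
rewrite dn_inv_nat negm_comp_chain -tensm_comp comp_idl comp_idr tensm_factorr.
by rewrite -?comp_assoc (comp_eq_chain (lunit_nat _)) -?comp_assoc.
Qed.

Definition mix_with (e : Hom fls t) A B : Hom (tens A B) (par A B) :=
  parm (idm A) (lunit B) ⋅ (parm (idm A) (e ⊗ idm B) ⋅
    (switchL A fls B ⋅ (rho_par_invL A ⊗ idm B))).

Lemma mix_with_natr e A {B B'} (g : Hom B B') :
  parm (idm A) g ⋅ mix_with e A B = mix_with e A B' ⋅ (idm A ⊗ g).
Proof.
rewrite /mix_with -?comp_assoc !parm_comp_chain !comp_idl -tensm_comp comp_idl comp_idr.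
have -> : (g ⋅ lunit B) ⋅ (e ⊗ idm B) = (lunit B' ⋅ (e ⊗ idm B')) ⋅ (idm fls ⊗ g).
  by rewrite -lunit_nat -!comp_assoc -!tensm_comp !comp_idl !comp_idr.
rewrite parm_idl_comp (tensm_factorr (rho_par_invL A) g) -?comp_assoc.
by rewrite (comp_eq_chain (switch_natr _ _ _ _ _)) -?comp_assoc.
Qed.

Lemma mix_with_unit e A : mix_with e A t ⋅ runit_inv A = parm (idm A) e ⋅ rho_par_invL A.
Proof.
rewrite /mix_with -?comp_assoc parm_comp_chain comp_idl lunit_unit runit_nat.
rewrite parm_idl_comp -?comp_assoc (comp_eq_chain (switch_runit _ _)).
by rewrite (comp_eq_chain (runit_nat _)) -?comp_assoc runit_iso2 comp_idr.
Qed.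

Lemma mix_with_fls e A :
  lunit fls ⋅ (e ⊗ idm fls) = runit fls ⋅ (idm fls ⊗ e) ->
  mix_with e A fls = rho_par_invL A ⋅ (runit A ⋅ (idm A ⊗ e)).
Proof.
move=> Ee.
rewrite /mix_with -?comp_assoc parm_comp_chain comp_idl Ee parm_idl_comp -?comp_assoc.
rewrite (comp_eq_chain (switch_natr _ _ _ _ _)) -?comp_assoc.
rewrite (comp_eq_chain (switch_runit _ _)) -tensm_comp comp_idl comp_idr.
by rewrite (tensm_factorl (rho_par_invL A)) (comp_eq_chain (runit_nat _)) -?comp_assoc.
Qed.

Lemma rho_par_mix_with_fls e (h : Hom fls fls) W (d : Hom W (tens fls fls)) :
  lunit fls ⋅ (e ⊗ idm fls) = runit fls ⋅ (idm fls ⊗ e) ->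
  rho_par fls ⋅ (parm (idm fls) h ⋅ (mix_with e fls fls ⋅ d))
  = runit fls ⋅ ((idm fls ⊗ (e ⋅ h)) ⋅ d).
Proof.
move=> Ee.
rewrite (comp_eq_chain (mix_with_natr _ _ _)) (mix_with_fls _ _ Ee).
rewrite -(comp_assoc d) -(comp_assoc (_ ⋅ d)) (comp_eq_chain (rho_par_iso _)) comp_idl.
by rewrite -comp_assoc tensm_comp_chain comp_idl.
Qed.

(* [fls_end] is the internal hom [f -o f], the codomain of [cur] on [Z /\ f -> f]. *)
Definition fls_end : Ob C := neg (tens (neg (@fls C)) (neg (neg (@fls C)))).

Definition fls_end_unit : Hom fls_end t :=
  dn t ⋅ negm ((dn_inv t ⊗ dn_inv (neg t)) ⋅ lunit_inv (neg t)).

Definition unit_fls_end : Hom t fls_end :=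
  negm (lunit (neg t) ⋅ (dn t ⊗ dn (neg t))) ⋅ dn_inv t.

Lemma fls_end_unitK : fls_end_unit ⋅ unit_fls_end = idm t.
Proof.
rewrite /fls_end_unit /unit_fls_end -?comp_assoc negm_comp_chain -?comp_assoc.
rewrite tensm_comp_chain !dn_iso2 tensm_id comp_idl lunit_iso2.
by rewrite negm_id comp_idl dn_iso2.
Qed.

Lemma unit_fls_endK : unit_fls_end ⋅ fls_end_unit = idm fls_end.
Proof.
rewrite /fls_end_unit /unit_fls_end -?comp_assoc (comp_eq_chain (dn_iso1 _)) comp_idl.
rewrite -negm_comp -?comp_assoc (comp_eq_chain (lunit_iso1 _)) comp_idl.
by rewrite -tensm_comp !dn_iso1 tensm_id negm_id.
Qed.

Lemma lunit_fls_surj {Z} (k : Hom (tens Z fls) fls) :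
  exists x : Hom Z t, lunit fls ⋅ (x ⊗ idm fls) = k.
Proof.
pose om := uncur unit_fls_end.
have om_uncur W (x : Hom W t) : uncur (unit_fls_end ⋅ x) = om ⋅ (x ⊗ idm fls).
  exact: uncur_nat_A.
have om_inj W (x y : Hom W t) : om ⋅ (x ⊗ idm fls) = om ⋅ (y ⊗ idm fls) -> x = y.
  by rewrite -!om_uncur => /uncur_inj; apply: (split_mono_cancel fls_end_unitK).
have om_surj W (k' : Hom (tens W fls) fls) :
    om ⋅ ((fls_end_unit ⋅ cur k') ⊗ idm fls) = k'.
  by rewrite -om_uncur comp_assoc unit_fls_endK comp_idl uncur_cur.
(* Every [Z /\ f -> f] is [om o (x /\ f)] for a unique [x].  Writing
   [lunit fls] as [om o (a /\ f)], [a] has a left inverse [w], which is also a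
   right inverse since Hom(t, t) is commutative; hence [lunit o (w /\ f) = om]. *)
pose a := fls_end_unit ⋅ cur (lunit fls).
pose w := fls_end_unit ⋅ cur (om ⋅ (lunit_inv fls ⋅ om)).
have wa : w ⋅ a = idm t.
  apply: om_inj; rewrite tensm_idr_comp (comp_eq_chain (om_surj _ _)) -?comp_assoc.
  by rewrite om_surj lunit_iso1 comp_idr tensm_id comp_idr.
have lunit_w : lunit fls ⋅ (w ⊗ idm fls) = om.
  rewrite -(om_surj _ (lunit fls)) -/a -?comp_assoc -tensm_comp comp_idl.
  by rewrite unit_endo_comm wa tensm_id comp_idr.
exists (w ⋅ (fls_end_unit ⋅ cur k)).
by rewrite tensm_idr_comp (comp_eq_chain lunit_w) om_surj.
Qed.

Lemma fls_counit_lunit_runit (e : Hom fls t) (d : Hom fls (tens fls fls)) :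
  runit fls ⋅ ((idm fls ⊗ e) ⋅ d) = idm fls ->
  lunit fls ⋅ (e ⊗ idm fls) = runit fls ⋅ (idm fls ⊗ e).
Proof.
move=> counit_r.
have [e' He'] := lunit_fls_surj (runit fls ⋅ (idm fls ⊗ e)).
have counit_l : lunit fls ⋅ ((e' ⊗ idm fls) ⋅ d) = idm fls.
  by rewrite comp_assoc He' -comp_assoc.
(* A left counit [e'] and a right counit [e] of [d] coincide. *)
have E1 : e = lunit t ⋅ ((e' ⊗ e) ⋅ d).
  rewrite (tensm_factorr e') -?comp_assoc (comp_eq_chain (lunit_nat _)).
  by rewrite -?comp_assoc counit_l comp_idr.
have E2 : e' = runit t ⋅ ((e' ⊗ e) ⋅ d).
  rewrite (tensm_factorl e') -?comp_assoc (comp_eq_chain (runit_nat _)).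
  by rewrite -?comp_assoc counit_r comp_idr.
by rewrite -He' {1}E1 {2}E2 lunit_unit.
Qed.

(* Without the triangle law for [dn] this automorphism of [f] need not be the identity. *)
Definition fls_twist : Hom (@fls C) fls := dn (neg t) ⋅ negm (dn t).

Lemma negm_dn_negm B (p : Hom (neg B) t) :
  negm (dn B ⋅ negm p) = negm fls_twist ⋅ (dn_inv t ⋅ p).
Proof.
have S : dn (neg (neg (neg B))) ⋅ (negm (dn (neg (neg B))) ⋅ dn_inv (neg B)) = negm (dn B).
  by rewrite -(negm_negm_dn B) (comp_eq_chain (dn_nat _)) -comp_assoc dn_iso2 comp_idr.
rewrite negm_comp /fls_twist negm_comp negm_negm_dn dn_inv_nat.
rewrite -?comp_assoc (negm_comp_chain (dn (neg t))) -dn_nat negm_comp -?comp_assoc.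
by rewrite (comp_eq_chain (dn_nat _)) -?comp_assoc S.
Qed.

Lemma dual_counit_parm B (d : Hom (neg B) (tens (neg B) (neg B))) (p : Hom (neg B) t)
    (g : Hom fls B) :
  lunit (neg B) ⋅ ((p ⊗ idm (neg B)) ⋅ d) = idm _ ->
  dn B ⋅ (negm d ⋅ parm g (dn B ⋅ negm p))
  = g ⋅ (rho_par fls ⋅ parm (idm fls) fls_twist).
Proof.
move=> counit_l.
have counit_l' : (p ⊗ idm (neg B)) ⋅ d = lunit_inv (neg B).
  by apply: (split_mono_cancel (lunit_iso1 (neg B))); rewrite counit_l lunit_iso2.
rewrite /rho_par /parm negm_id -?comp_assoc (comp_eq_chain (eq_sym (dn_nat g))).
rewrite -?comp_assoc -!negm_comp -?comp_assoc.
congr (comp _ (negm _)).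
rewrite negm_dn_negm lunit_inv_nat -counit_l' -?comp_assoc !tensm_comp_chain !comp_idl.
by rewrite !comp_idr -?comp_assoc.
Qed.

End StarAutonomous.

Section B1.
Variable C : B1cat.
Implicit Types A B : Ob C.
Local Notation t := (@unit (b1_sa C)).

Lemma mixE A B : mix A B = mix_with (Pi (@fls C)) A B.
Proof. by rewrite /mix_with switchLE rho_par_invLE. Qed.

Lemma Delta_lcounit A : lunit A ⋅ ((Pi A ⊗ idm A) ⋅ Delta A) = idm A.
Proof.
rewrite -runit_sym -?comp_assoc (comp_eq_chain (sym_nat _ _)) -?comp_assoc Delta_cocomm.
exact: Delta_counit.
Qed.

Lemma Delta_rcounit A : (idm A ⊗ Pi A) ⋅ Delta A = runit_inv A.
Proof. by apply: (split_mono_cancel (runit_iso1 A)); rewrite Delta_counit runit_iso2. Qed.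

Lemma Pi_fls_twist : single_mixed C -> Pi fls ⋅ fls_twist = Pi (@fls C).
Proof.
rewrite /single_mixed /amalg => SM.
rewrite /fls_twist (comp_eq_chain (eq_sym (dn_nat _))) -comp_assoc -negm_comp.
by rewrite -!SM.
Qed.

Lemma mix_with_Delta_Pi e A X (f : Hom A X) :
  parm f (Pi A) ⋅ (mix_with e A A ⋅ Delta A) = parm f e ⋅ rho_par_invL A.
Proof.
have -> : parm f (Pi A) = parm f (idm t) ⋅ parm (idm A) (Pi A).
  by rewrite parm_comp comp_idl comp_idr.
rewrite -comp_assoc (comp_eq_chain (mix_with_natr _ _ _)) -comp_assoc.
by rewrite Delta_rcounit mix_with_unit parm_comp_chain comp_idl comp_idr.
Qed.

Lemma nabla_unit_parm A (f : Hom A t) :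
  single_mixed C -> nabla t ⋅ (parm f (Pi fls) ⋅ rho_par_invL A) = f.
Proof.
rewrite /single_mixed /amalg => SM.
have -> : parm f (Pi fls) = parm (idm t) (Pi fls) ⋅ parm f (idm fls).
  by rewrite parm_comp comp_idl comp_idr.
rewrite -comp_assoc rho_par_inv_nat rho_par_invLE /rho_par_inv /nabla /parm negm_id.
rewrite -?comp_assoc !negm_comp_chain -?comp_assoc tensm_comp_chain comp_idl -SM.
by rewrite Delta_lcounit negm_id comp_idl (comp_eq_chain (dn_iso2 _)) comp_idl.
Qed.

Lemma plus_Pi A (f : Hom A t) : single_mixed C -> plus f (Pi A) = f.
Proof. by move=> SM; rewrite /plus mixE mix_with_Delta_Pi nabla_unit_parm. Qed.

Lemma nabla_parm_amalg B (g : Hom fls B) :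
  nabla B ⋅ parm g (amalg B) = g ⋅ (rho_par fls ⋅ parm (idm fls) fls_twist).
Proof. by rewrite /nabla /amalg -comp_assoc; apply: dual_counit_parm; apply: Delta_lcounit. Qed.

Lemma plus_amalg B (g : Hom fls B) : single_mixed C -> plus g (amalg B) = g.
Proof.
move=> SM; rewrite /plus mixE comp_assoc nabla_parm_amalg.
have e_lr := fls_counit_lunit_runit _ _ (Delta_counit (@fls C)).
rewrite -!(comp_assoc (mix_with _ _ _ ⋅ Delta fls)).
by rewrite rho_par_mix_with_fls // Pi_fls_twist // Delta_counit comp_idr.
Qed.

End B1.

Theorem proposition5 (C : B1cat) :
  single_mixed C ->
  Pi (@unit C) = idm (@unit C) ->
  (forall (A : Ob C) (f : Hom A (@unit C)), plus f (Pi A) = f) /\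
  (forall (B : Ob C) (g : Hom (@fls C) B), plus g (amalg B) = g).
Proof.
move=> SM _; split=> [A f | B g].
- exact: plus_Pi.
- exact: plus_amalg.
Qed.
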